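(* Let $n\ge2$ and $\sigma>0$. Write eigenvectors of $\mathbf A_\sigma^{-1}\mathbf B$ as $\mathbf p=(p_1,\dots,p_n)$, normalized with $\|\mathbf p\|=1$. Then the following hold. (i) The matrix $\mathbf A_\sigma^{-1}\mathbf B$ has $n-1$ linearly independent eigenvectors associated with positive eigenvalues. (ii) Exactly $\lfloor n/2\rfloor$ of these eigenvectors satisfy $p_l=p_{n-l}$ for $l=1,\dots,n-1$ and $p_n\neq0$. (iii) The remaining $\lfloor (n-1)/2\rfloor$ of these eigenvectors have entries $p_l=b\sin(l\theta_j)$ for $l=1,\dots,n$. Here $\theta_j=2\pi m_j/n$ for some $m_j\in\mathbb Z$, and $b\in\mathbb R\setminus\{0\}$ is a normalizing constant. In particular these eigenvectors satisfy $p_l=-p_{n-l}$ for $l=1,\dots,n-1$ and $p_n=0$, and they do not depend on $\sigma$. (iv) The eigenvector $\mathbf p_n$ associated with the unique negative eigenvalue satisfies $p_{l}=p_{n-l}$ for $l=1,\dots,n-1$ and $p_n\neq 0$.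
   Context: Let $\mathbf L\in\mathbb R^{n\times n}$ be the periodic discrete one-dimensional Laplacian, i.e. $(\mathbf L\mathbf x)_i=x_{i-1}-2x_i+x_{i+1}$ with indices taken modulo $n$. For $\sigma\ge 0$ set $\mathbf A_\sigma=\mathbf I-\sigma\mathbf L$, which is symmetric positive definite. Let $\mathbf B=\mathrm{diag}(1,\dots,1,-1)\in\mathbb R^{n\times n}$. It is known that $\mathbf A_\sigma^{-1}\mathbf B$ is diagonalizable with real eigenvalues, exactly one of which is negative and $n-1$ of which are positive. *)

From Stdlib Require Import Reals Lra Lia Arith.
Open Scope R_scope.

(* Vectors in R^n are represented as functions p : nat -> R, of which only
   the entries p 1, ..., p n (1-based, as in the paper) are relevant. *)

Definition prevn (n i : nat) : nat := if Nat.eqb i 1 then n else (i - 1)%nat.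
Definition nextn (n i : nat) : nat := if Nat.eqb i n then 1%nat else (i + 1)%nat.

Definition Lap (n : nat) (x : nat -> R) (i : nat) : R :=
  x (prevn n i) - 2 * x i + x (nextn n i).

Definition Aop (n : nat) (sigma : R) (x : nat -> R) (i : nat) : R :=
  x i - sigma * Lap n x i.

Definition Bop (n : nat) (x : nat -> R) (i : nat) : R :=
  if Nat.eqb i n then - x i else x i.

Fixpoint vsum (k : nat) (f : nat -> R) : R :=
  match k with
  | O => 0
  | S k' => vsum k' f + f (S k')
  end.

Fixpoint cnt (m : nat) (s : nat -> bool) : nat :=
  match m with
  | O => O
  | S m' => (cnt m' s + (if s (S m') then 1 else 0))%nat
  end.

(* p is an eigenvector of A_sigma^{-1} B with eigenvalue lam:
   A_sigma^{-1} (B p) = lam p, i.e. (A_sigma being invertible) lam p is the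
   solution x of A_sigma x = B p, and p <> 0. *)
Definition is_eigvec_AinvB (n : nat) (sigma lam : R) (p : nat -> R) : Prop :=
  (exists i, (1 <= i <= n)%nat /\ p i <> 0) /\
  forall i, (1 <= i <= n)%nat ->
    Aop n sigma (fun l => lam * p l) i = Bop n p i.

Definition unit_norm (n : nat) (p : nat -> R) : Prop :=
  vsum n (fun l => p l ^ 2) = 1.

Definition lin_indep (n : nat) (P : nat -> nat -> R) : Prop :=
  forall c : nat -> R,
    (forall i, (1 <= i <= n)%nat -> vsum n (fun k => c k * P k i) = 0) ->
    forall k, (1 <= k <= n)%nat -> c k = 0.

Definition sym_vec (n : nat) (p : nat -> R) : Prop :=
  forall l, (1 <= l <= n - 1)%nat -> p l = p (n - l)%nat.

Definition antisym_vec (n : nat) (p : nat -> R) : Prop :=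
  forall l, (1 <= l <= n - 1)%nat -> p l = - p (n - l)%nat.

From Stdlib Require Import Reals ZArith Lra Lia Arith.
Open Scope R_scope.

(* In the discrete Fourier basis [A_sigma] is diagonal: the modes [cos (l theta_m)] and
   [sin (l theta_m)], [theta_m = 2 pi m / n], have eigenvalue
   [alpha_m = 1 + 2 sigma (1 - cos theta_m)], while [B] differs from the identity only in the
   last coordinate.  Sine modes vanish there, so [sin (l theta_m)] with [0 < 2 m < n] is an
   eigenvector of [A_sigma^-1 B] for [1 / alpha_m].  For any root [mu] of the secular equation
   [sum_m 1 / (mu alpha_m - 1) = - n / 2], the vector [V_l = sum_m cos (l theta_m) / (mu alpha_m - 1)]
   is a symmetric eigenvector for [mu], since [mu A V = V + n e_n] and [V_n = - n / 2].  After
   clearing denominators the secular function has sign [(-1)^k] at the pole [1 / alpha_k],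
   so the intermediate value theorem gives a root in each interval
   [(1 / alpha_k, 1 / alpha_(k-1))], [1 <= k <= n/2], and one negative root.  The positive
   eigenvalues so obtained interlace with the [1 / alpha_m], hence all [n] eigenvalues are
   distinct, and eigenvectors for distinct eigenvalues are orthogonal for the inner product
   defined by the positive definite [A_sigma], hence linearly independent. *)

(** * Finite sums and products *)

(* [rsum N F = F 0 + ... + F (N - 1)], indexed from 0 unlike [vsum]. *)
Fixpoint rsum (N : nat) (F : nat -> R) : R :=
  match N with O => 0 | S N' => rsum N' F + F N' end.

Fixpoint rprod (N : nat) (F : nat -> R) : R :=
  match N with O => 1 | S N' => rprod N' F * F N' end.

Definition prod_skip (N k : nat) (F : nat -> R) : R :=
  rprod N (fun j => if Nat.eqb j k then 1 else F j).

Lemma rsum_ext N F G : (forall m, (m < N)%nat -> F m = G m) -> rsum N F = rsum N G.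
Proof.
  induction N as [|N IH]; intros H; simpl; [reflexivity|].
  rewrite IH by (intros; apply H; lia). rewrite H by lia. reflexivity.
Qed.

Lemma rsum_scal N c F : rsum N (fun m => c * F m) = c * rsum N F.
Proof. induction N as [|N IH]; simpl; [ring|]. rewrite IH; ring. Qed.

Lemma rsum_plus N F G : rsum N (fun m => F m + G m) = rsum N F + rsum N G.
Proof. induction N as [|N IH]; simpl; [ring|]. rewrite IH; ring. Qed.

Lemma rsum_const N c : rsum N (fun _ => c) = INR N * c.
Proof. induction N as [|N IH]; simpl rsum; [simpl; ring|]. rewrite IH, S_INR; ring. Qed.

Lemma rsum_ge N F c : (forall m, (m < N)%nat -> c <= F m) -> INR N * c <= rsum N F.
Proof.
  induction N as [|N IH]; intros H; simpl rsum; [simpl; lra|].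
  rewrite S_INR. assert (H1 := H N (Nat.lt_succ_diag_r N)).
  assert (INR N * c <= rsum N F) by (apply IH; intros; apply H; lia). lra.
Qed.

Lemma rsum_pos N F k :
  (forall m, (m < N)%nat -> 0 <= F m) -> (k < N)%nat -> 0 < F k -> 0 < rsum N F.
Proof.
  intros H Hk Hp.
  assert (Hge : forall M, (M <= N)%nat -> 0 <= rsum M F).
  { intros M HM. replace 0 with (INR M * 0) by ring. apply rsum_ge. intros; apply H; lia. }
  induction N as [|N IH]; simpl; [lia|].
  destruct (Nat.eq_dec k N) as [->|Hne].
  - assert (0 <= rsum N F) by (apply Hge; lia). lra.
  - assert (0 < rsum N F) by (apply IH; intros; try apply H; try apply Hge; lia).
    assert (0 <= F N) by (apply H; lia). lra.
Qed.

Lemma rprod_eq0 N k F : (k < N)%nat -> F k = 0 -> rprod N F = 0.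
Proof.
  induction N as [|N IH]; intros Hk HF; simpl; [lia|].
  destruct (Nat.eq_dec k N) as [->|]; [rewrite HF | rewrite IH by (auto; lia)]; ring.
Qed.

Lemma rprod_neq0 N F : (forall j, (j < N)%nat -> F j <> 0) -> rprod N F <> 0.
Proof.
  induction N as [|N IH]; intros H; simpl; [lra|].
  apply Rmult_integral_contrapositive_currified; [apply IH; intros|]; apply H; lia.
Qed.

Lemma rprod_mult N F G : rprod N F * rprod N G = rprod N (fun j => F j * G j).
Proof. induction N as [|N IH]; simpl; [ring|]. rewrite <- IH; ring. Qed.

Lemma rprod_pos N F : (forall j, (j < N)%nat -> 0 < F j) -> 0 < rprod N F.
Proof.
  induction N as [|N IH]; intros H; simpl; [lra|].
  apply Rmult_lt_0_compat; [apply IH; intros|]; apply H; lia.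
Qed.

Lemma prod_skip_mul N k F : (k < N)%nat -> prod_skip N k F * F k = rprod N F.
Proof.
  unfold prod_skip. induction N as [|N IH]; intros Hk; simpl; [lia|].
  destruct (Nat.eq_dec k N) as [->|Hne].
  - rewrite Nat.eqb_refl.
    assert (E : forall M, (M <= N)%nat ->
              rprod M (fun j => if Nat.eqb j N then 1 else F j) = rprod M F).
    { induction M as [|M IHM]; intros HM; simpl; [reflexivity|].
      rewrite IHM by lia. replace (Nat.eqb M N) with false by (symmetry; apply Nat.eqb_neq; lia).
      reflexivity. }
    rewrite E by lia. ring.
  - replace (Nat.eqb N k) with false by (symmetry; apply Nat.eqb_neq; lia).
    rewrite <- IH by lia. ring.
Qed.

Lemma prod_skip_eq0 N k j F : (j < N)%nat -> j <> k -> F j = 0 -> prod_skip N k F = 0.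
Proof.
  intros Hj Hjk HF. apply (rprod_eq0 N j); [exact Hj|].
  replace (Nat.eqb j k) with false by (symmetry; apply Nat.eqb_neq; exact Hjk). exact HF.
Qed.

Lemma prod_skip_sign N k F :
  (forall j, (j < N)%nat -> (j < k)%nat -> F j < 0) ->
  (forall j, (j < N)%nat -> (k < j)%nat -> 0 < F j) ->
  0 < (-1) ^ (Nat.min N k) * prod_skip N k F.
Proof.
  unfold prod_skip. induction N as [|N IH]; intros Hneg Hpos; cbn [rprod]; [simpl; lra|].
  assert (H : 0 < (-1) ^ (Nat.min N k) * rprod N (fun j => if Nat.eqb j k then 1 else F j))
    by (apply IH; intros; [apply Hneg | apply Hpos]; lia).
  destruct (Nat.eq_dec N k) as [<-|Hne].
  - rewrite Nat.eqb_refl. replace (Nat.min (S N) N) with (Nat.min N N) by lia. lra.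
  - replace (Nat.eqb N k) with false by (symmetry; apply Nat.eqb_neq; exact Hne).
    destruct (Nat.lt_ge_cases N k).
    + replace (Nat.min (S N) k) with (S (Nat.min N k)) by lia. simpl pow.
      assert (F N < 0) by (apply Hneg; lia). nra.
    + replace (Nat.min (S N) k) with (Nat.min N k) by lia.
      assert (0 < F N) by (apply Hpos; lia). nra.
Qed.

Lemma continuity_rsum N (F : nat -> R -> R) :
  (forall m, continuity (F m)) -> continuity (fun x => rsum N (fun m => F m x)).
Proof.
  intros H; induction N as [|N IH]; simpl.
  - apply continuity_const. intros ? ?; reflexivity.
  - apply (continuity_plus (fun x => rsum N (fun m => F m x)) (F N)); auto.
Qed.

Lemma continuity_rprod N (F : nat -> R -> R) :
  (forall m, continuity (F m)) -> continuity (fun x => rprod N (fun m => F m x)).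
Proof.
  intros H; induction N as [|N IH]; simpl.
  - apply continuity_const. intros ? ?; reflexivity.
  - apply (continuity_mult (fun x => rprod N (fun m => F m x)) (F N)); auto.
Qed.

Lemma continuity_affine a b : continuity (fun x => x * a + b).
Proof.
  apply (continuity_plus (fun x => x * a) (fun _ => b)).
  - apply (continuity_mult id (fun _ => a)); [apply derivable_continuous, derivable_id|].
    apply continuity_const; intros ? ?; reflexivity.
  - apply continuity_const; intros ? ?; reflexivity.
Qed.

(** * The operators A and B *)

Definition dot (n : nat) (p q : nat -> R) : R := vsum n (fun i => p i * q i).

Lemma vsum_ext k f g : (forall i, (1 <= i <= k)%nat -> f i = g i) -> vsum k f = vsum k g.
Proof.
  induction k as [|k IH]; intros H; simpl; [reflexivity|].
  rewrite IH by (intros; apply H; lia). rewrite H by lia. reflexivity.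
Qed.

Lemma vsum_scal k c f : vsum k (fun i => c * f i) = c * vsum k f.
Proof. induction k as [|k IH]; cbn [vsum]; [ring|]. rewrite IH; ring. Qed.

Lemma vsum_plus k f g : vsum k (fun i => f i + g i) = vsum k f + vsum k g.
Proof. induction k as [|k IH]; cbn [vsum]; [ring|]. rewrite IH; ring. Qed.

Lemma vsum_zero k : vsum k (fun _ => 0) = 0.
Proof. induction k as [|k IH]; cbn [vsum]; [ring|]. rewrite IH; ring. Qed.

Lemma vsum_swap a b (F : nat -> nat -> R) :
  vsum a (fun i => vsum b (fun k => F i k)) = vsum b (fun k => vsum a (fun i => F i k)).
Proof.
  induction a as [|a IH]; simpl; [now rewrite vsum_zero|].
  rewrite IH, <- vsum_plus. reflexivity.
Qed.

Lemma vsum_single k F j :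
  (1 <= j <= k)%nat -> (forall i, (1 <= i <= k)%nat -> i <> j -> F i = 0) -> vsum k F = F j.
Proof.
  induction k as [|k IH]; intros Hj H; simpl; [lia|].
  destruct (Nat.eq_dec j (S k)) as [->|Hne].
  - rewrite (vsum_ext k F (fun _ => 0)), vsum_zero by (intros; apply H; lia). ring.
  - rewrite IH, (H (S k)) by (intros; try apply H; lia). ring.
Qed.

Lemma vsum_nonneg k f : (forall i, (1 <= i <= k)%nat -> 0 <= f i) -> 0 <= vsum k f.
Proof.
  induction k as [|k IH]; intros H; simpl; [lra|].
  assert (0 <= vsum k f) by (apply IH; intros; apply H; lia).
  assert (0 <= f (S k)) by (apply H; lia). lra.
Qed.

Lemma vsum_pos k f j :
  (forall i, (1 <= i <= k)%nat -> 0 <= f i) -> (1 <= j <= k)%nat -> 0 < f j -> 0 < vsum k f.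
Proof.
  induction k as [|k IH]; intros H Hj Hp; simpl; [lia|].
  assert (0 <= vsum k f) by (apply vsum_nonneg; intros; apply H; lia).
  assert (0 <= f (S k)) by (apply H; lia).
  destruct (Nat.eq_dec j (S k)) as [->|]; [lra|].
  assert (0 < vsum k f) by (apply IH; [intros; apply H; lia | lia | exact Hp]). lra.
Qed.

Lemma vsum_sq_diff k f g :
  vsum k (fun i => (f i - g i) ^ 2)
  = vsum k (fun i => f i * f i) + vsum k (fun i => g i * g i) - 2 * vsum k (fun i => g i * f i).
Proof. induction k as [|k IH]; cbn [vsum]; [ring|]. rewrite IH; ring. Qed.

Lemma dot_pos n p : (exists i, (1 <= i <= n)%nat /\ p i <> 0) -> 0 < dot n p p.
Proof.
  intros [j [Hj Hp]]. apply (vsum_pos n _ j); [intros; nra | exact Hj |].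
  apply Rsqr_pos_lt in Hp. exact Hp.
Qed.

Lemma vsum_succ_l k h : vsum (S k) h = h 1%nat + vsum k (fun i => h (S i)).
Proof.
  induction k as [|k IH]; [simpl; ring|].
  change (vsum (S (S k)) h) with (vsum (S k) h + h (S (S k))). rewrite IH. simpl. ring.
Qed.

Lemma vsum_nextn n g : (1 <= n)%nat -> vsum n (fun i => g (nextn n i)) = vsum n g.
Proof.
  intros Hn. destruct n as [|k]; [lia|].
  rewrite (vsum_succ_l k g). simpl vsum at 1.
  unfold nextn at 2. rewrite Nat.eqb_refl.
  rewrite (vsum_ext k _ (fun i => g (S i))); [ring|].
  intros i Hi. unfold nextn.
  replace (Nat.eqb i (S k)) with false by (symmetry; apply Nat.eqb_neq; lia). f_equal; lia.
Qed.

Lemma vsum_prevn n f g :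
  (1 <= n)%nat -> vsum n (fun i => f (prevn n i) * g i) = vsum n (fun i => g (nextn n i) * f i).
Proof.
  intros Hn. rewrite <- (vsum_nextn n (fun i => f (prevn n i) * g i)) by exact Hn.
  apply vsum_ext. intros i Hi.
  assert (E : prevn n (nextn n i) = i).
  { unfold nextn, prevn. destruct (Nat.eqb_spec i n) as [->|]; [reflexivity|].
    destruct (Nat.eqb_spec (i + 1) 1); lia. }
  rewrite E. ring.
Qed.

Lemma Aop_scal n s c x i : Aop n s (fun l => c * x l) i = c * Aop n s x i.
Proof. unfold Aop, Lap; ring. Qed.

Lemma Aop_ext n s x y i : (forall j, x j = y j) -> Aop n s x i = Aop n s y i.
Proof. intros H. unfold Aop, Lap. rewrite !H. reflexivity. Qed.

Lemma Aop_rsum n s K (c : nat -> R) (F : nat -> nat -> R) i :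
  Aop n s (fun l => rsum K (fun m => c m * F m l)) i = rsum K (fun m => c m * Aop n s (F m) i).
Proof. unfold Aop, Lap. induction K as [|K IH]; simpl; [ring|]. rewrite <- IH. ring. Qed.

Lemma Aop_dot n s p q k :
  vsum k (fun i => Aop n s p i * q i) = (1 + 2 * s) * vsum k (fun i => p i * q i)
    - s * (vsum k (fun i => p (prevn n i) * q i) + vsum k (fun i => p (nextn n i) * q i)).
Proof. induction k as [|k IH]; cbn [vsum]; [ring|]. rewrite IH. unfold Aop, Lap. ring. Qed.

Lemma Aop_self_adjoint n s p q : (1 <= n)%nat -> dot n (Aop n s p) q = dot n p (Aop n s q).
Proof.
  intros Hn. assert (Hc : forall u v, dot n u v = dot n v u)
    by (intros; apply vsum_ext; intros; ring).
  rewrite (Hc p). unfold dot. rewrite !Aop_dot, !vsum_prevn by exact Hn.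
  fold (dot n p q) (dot n q p). rewrite (Hc q). ring.
Qed.

(* The energy identity [<A p, p> = |p|^2 + s sum (p_i - p_(i+1))^2]. *)
Lemma Aop_dot_self_pos n s p :
  (1 <= n)%nat -> 0 <= s -> (exists i, (1 <= i <= n)%nat /\ p i <> 0) ->
  0 < dot n (Aop n s p) p.
Proof.
  intros Hn Hs Hp.
  assert (E : dot n (Aop n s p) p
              = dot n p p + s * vsum n (fun i => (p i - p (nextn n i)) ^ 2)).
  { unfold dot. rewrite Aop_dot, vsum_prevn, vsum_sq_diff by exact Hn.
    rewrite (vsum_nextn n (fun i => p i * p i)) by exact Hn. ring. }
  assert (0 <= vsum n (fun i => (p i - p (nextn n i)) ^ 2))
    by (apply vsum_nonneg; intros; apply pow2_ge_0).
  assert (0 < dot n p p) by (apply dot_pos; exact Hp).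
  rewrite E. nra.
Qed.

Lemma eigvec_A_orthogonal n s lam mu p q :
  (1 <= n)%nat -> is_eigvec_AinvB n s lam p -> is_eigvec_AinvB n s mu q -> lam <> mu ->
  dot n (Aop n s p) q = 0.
Proof.
  intros Hn [_ Hp] [_ Hq] Hne.
  assert (Hl : lam * dot n (Aop n s p) q = dot n (Bop n p) q).
  { unfold dot. rewrite <- vsum_scal. apply vsum_ext. intros i Hi.
    rewrite <- (Hp i Hi), Aop_scal. ring. }
  assert (Hm : mu * dot n (Aop n s p) q = dot n p (Bop n q)).
  { rewrite Aop_self_adjoint by exact Hn. unfold dot. rewrite <- vsum_scal.
    apply vsum_ext. intros i Hi. rewrite <- (Hq i Hi), Aop_scal. ring. }
  assert (HB : dot n (Bop n p) q = dot n p (Bop n q))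
    by (apply vsum_ext; intros i _; unfold Bop; destruct (Nat.eqb i n); ring).
  apply (Rmult_eq_reg_l (lam - mu)); lra.
Qed.

(* Pair a vanishing combination with [A P_j]: A-orthogonality kills all but the j-th term. *)
Lemma lin_indep_of_eigvecs n s (P : nat -> nat -> R) (lam : nat -> R) :
  (1 <= n)%nat -> 0 <= s ->
  (forall k, (1 <= k <= n)%nat -> is_eigvec_AinvB n s (lam k) (P k)) ->
  (forall j k, (1 <= j <= n)%nat -> (1 <= k <= n)%nat -> j <> k -> lam j <> lam k) ->
  lin_indep n P.
Proof.
  intros Hn Hs Heig Hdist c Hc j Hj.
  set (G k := dot n (Aop n s (P j)) (P k)).
  assert (Hpos : 0 < G j) by (apply Aop_dot_self_pos; try apply (Heig j Hj); assumption).
  assert (E : vsum n (fun k => c k * G k) = 0).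
  { unfold G, dot. rewrite (vsum_ext n _ (fun k => vsum n (fun i => c k * (Aop n s (P j) i * P k i))))
      by (intros; rewrite vsum_scal; reflexivity).
    rewrite <- vsum_swap, <- (vsum_zero n). apply vsum_ext. intros i Hi.
    rewrite <- (Rmult_0_r (Aop n s (P j) i)), <- (Hc i Hi), <- vsum_scal.
    apply vsum_ext; intros; ring. }
  rewrite (vsum_single n _ j Hj) in E.
  - apply (Rmult_eq_reg_r (G j)); lra.
  - intros k Hk Hkj. unfold G. rewrite (eigvec_A_orthogonal n s (lam j) (lam k)); [ring | exact Hn | apply Heig; exact Hj |
    apply Heig; exact Hk | apply Hdist; [exact Hj | exact Hk | lia]].
Qed.

(** * Fourier modes *)

Definition freq (n m : nat) : R := 2 * PI * INR m / INR n.
Definition alpha (n : nat) (s : R) (m : nat) : R := 1 + 2 * s * (1 - cos (freq n m)).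
Definition cos_mode (n m l : nat) : R := cos (INR l * freq n m).
Definition sin_mode (n m l : nat) : R := sin (INR l * freq n m).

Lemma INR_mul_freq n m : (1 <= n)%nat -> INR n * freq n m = 0 + 2 * INR m * PI.
Proof. intros Hn. unfold freq. assert (INR n <> 0) by (apply not_0_INR; lia). field; auto. Qed.

Lemma periodic_prevn n m l (f : R -> R) :
  (1 <= n)%nat -> (1 <= l <= n)%nat -> (forall x k, f (x + 2 * INR k * PI) = f x) ->
  f (INR (prevn n l) * freq n m) = f (INR l * freq n m - freq n m).
Proof.
  intros Hn Hl Hf. unfold prevn. destruct (Nat.eqb_spec l 1) as [->|].
  - rewrite INR_mul_freq, Hf by exact Hn. f_equal. simpl; ring.
  - rewrite minus_INR by lia. f_equal. simpl; ring.
Qed.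

Lemma periodic_nextn n m l (f : R -> R) :
  (1 <= n)%nat -> (1 <= l <= n)%nat -> (forall x k, f (x + 2 * INR k * PI) = f x) ->
  f (INR (nextn n l) * freq n m) = f (INR l * freq n m + freq n m).
Proof.
  intros Hn Hl Hf. unfold nextn. destruct (Nat.eqb_spec l n) as [->|].
  - rewrite INR_mul_freq by exact Hn.
    replace (0 + 2 * INR m * PI + freq n m) with (freq n m + 2 * INR m * PI) by ring.
    rewrite Hf. f_equal. simpl; ring.
  - rewrite plus_INR. f_equal. simpl; ring.
Qed.

Lemma Aop_cos_mode n s m l :
  (1 <= n)%nat -> (1 <= l <= n)%nat -> Aop n s (cos_mode n m) l = alpha n s m * cos_mode n m l.
Proof.
  intros Hn Hl. unfold Aop, Lap, cos_mode, alpha.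
  rewrite (periodic_prevn n m l cos), (periodic_nextn n m l cos)
    by (auto; intros; apply cos_period).
  rewrite cos_minus, cos_plus. ring.
Qed.

Lemma Aop_sin_mode n s m l :
  (1 <= n)%nat -> (1 <= l <= n)%nat -> Aop n s (sin_mode n m) l = alpha n s m * sin_mode n m l.
Proof.
  intros Hn Hl. unfold Aop, Lap, sin_mode, alpha.
  rewrite (periodic_prevn n m l sin), (periodic_nextn n m l sin)
    by (auto; intros; apply sin_period).
  rewrite sin_minus, sin_plus. ring.
Qed.

Lemma cos_mode_last n m : (1 <= n)%nat -> cos_mode n m n = 1.
Proof. intros Hn. unfold cos_mode. rewrite INR_mul_freq, cos_period by exact Hn. apply cos_0. Qed.

Lemma sin_mode_last n m : (1 <= n)%nat -> sin_mode n m n = 0.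
Proof. intros Hn. unfold sin_mode. rewrite INR_mul_freq, sin_period by exact Hn. apply sin_0. Qed.

Lemma reflect_freq n m l :
  (1 <= n)%nat -> (l <= n)%nat ->
  INR (n - l) * freq n m = - (INR l * freq n m) + 2 * INR m * PI.
Proof.
  intros Hn Hl. rewrite minus_INR, Rmult_minus_distr_r, INR_mul_freq by assumption. ring.
Qed.

Lemma cos_mode_reflect n m l :
  (1 <= n)%nat -> (l <= n)%nat -> cos_mode n m (n - l) = cos_mode n m l.
Proof. intros Hn Hl. unfold cos_mode. rewrite reflect_freq, cos_period, cos_neg by assumption. reflexivity. Qed.

Lemma sin_mode_reflect n m l :
  (1 <= n)%nat -> (l <= n)%nat -> sin_mode n m (n - l) = - sin_mode n m l.
Proof. intros Hn Hl. unfold sin_mode. rewrite reflect_freq, sin_period, sin_neg by assumption. reflexivity. Qed.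

Lemma sum_cos_telescope N x :
  2 * sin (x / 2) * rsum N (fun m => cos (INR m * x)) = sin ((INR N - / 2) * x) + sin (x / 2).
Proof.
  induction N as [|N IH]; simpl rsum.
  - replace ((INR 0 - / 2) * x) with (- (x / 2)) by (simpl; field). rewrite sin_neg. ring.
  - rewrite Rmult_plus_distr_l, IH, S_INR.
    replace ((INR N - / 2) * x) with (INR N * x - x / 2) by field.
    replace ((INR N + 1 - / 2) * x) with (INR N * x + x / 2) by field.
    rewrite sin_minus, sin_plus. ring.
Qed.

Lemma PI_frac_bounds a b : 0 < b -> 0 <= a <= b -> 0 <= PI * a / b <= PI.
Proof.
  intros Hb Ha. pose proof PI_RGT_0. set (t := a / b).
  assert (a = t * b) by (unfold t; field; lra).
  replace (PI * a / b) with (PI * t) by (unfold t; field; lra). split; nra.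
Qed.

Lemma PI_frac_strict a b : 0 < b -> 0 < a < b -> 0 < PI * a / b < PI.
Proof.
  intros Hb Ha. pose proof PI_RGT_0. set (t := a / b).
  assert (a = t * b) by (unfold t; field; lra).
  replace (PI * a / b) with (PI * t) by (unfold t; field; lra). split; nra.
Qed.

Lemma freq_PI_frac n m : freq n m = PI * (2 * INR m) / INR n.
Proof. unfold freq, Rdiv. ring. Qed.

Lemma rsum_cos_mode n l :
  (1 <= n)%nat -> (1 <= l <= n)%nat ->
  rsum n (fun m => cos_mode n m l) = if Nat.eqb l n then INR n else 0.
Proof.
  intros Hn Hl. assert (Hn0 : 0 < INR n) by (apply lt_0_INR; lia).
  destruct (Nat.eqb_spec l n) as [->|Hln].
  - rewrite (rsum_ext n _ (fun _ => 1)) by (intros; apply cos_mode_last, Hn).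
    rewrite rsum_const; ring.
  - set (x := 2 * PI * INR l / INR n).
    rewrite (rsum_ext n _ (fun m => cos (INR m * x)))
      by (intros; unfold cos_mode, freq, x; f_equal; field; lra).
    assert (Hs : 0 < sin (x / 2)).
    { replace (x / 2) with (PI * INR l / INR n) by (unfold x; field; lra).
      assert (0 < INR l < INR n) by (split; [apply lt_0_INR | apply lt_INR]; lia).
      apply sin_gt_0; apply PI_frac_strict; lra. }
    assert (T := sum_cos_telescope n x).
    replace ((INR n - / 2) * x) with (- (x / 2) + 2 * INR l * PI) in T by (unfold x; field; lra).
    rewrite sin_period, sin_neg in T.
    apply (Rmult_eq_reg_l (2 * sin (x / 2))); lra.
Qed.

Lemma alpha_ge_1 n s m : 0 <= s -> 1 <= alpha n s m.
Proof. intros Hs. unfold alpha. pose proof (COS_bound (freq n m)). nra. Qed.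

Lemma alpha_reflect n s m : (1 <= n)%nat -> (m <= n)%nat -> alpha n s (n - m) = alpha n s m.
Proof.
  intros Hn Hm. unfold alpha, freq. assert (0 < INR n) by (apply lt_0_INR; lia).
  rewrite minus_INR by exact Hm.
  replace (2 * PI * (INR n - INR m) / INR n) with (- (2 * PI * INR m / INR n) + 2 * INR 1 * PI)
    by (simpl; field; lra).
  rewrite cos_period, cos_neg. reflexivity.
Qed.

(* [cos] is decreasing on [0, pi], which contains the frequencies [2 pi j / n] for [2 j <= n]. *)
Lemma alpha_increasing n s j j' :
  (1 <= n)%nat -> 0 < s -> (j < j')%nat -> (2 * j' <= n)%nat -> alpha n s j < alpha n s j'.
Proof.
  intros Hn Hs Hj Hj'. unfold alpha.
  assert (0 < INR n) by (apply lt_0_INR; lia).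
  assert (INR j < INR j') by (apply lt_INR; exact Hj).
  assert (0 <= INR j) by apply pos_INR.
  assert (2 * INR j' <= INR n) by (rewrite <- (mult_INR 2); apply le_INR; exact Hj').
  assert (Hlt : freq n j < freq n j').
  { unfold freq, Rdiv. apply Rmult_lt_compat_r; [apply Rinv_0_lt_compat; lra|].
    pose proof PI_RGT_0. nra. }
  assert (cos (freq n j') < cos (freq n j)).
  { rewrite !freq_PI_frac in *.
    apply cos_decreasing_1; try lra; apply PI_frac_bounds; lra. }
  nra.
Qed.

Lemma alpha_le n s j j' :
  (1 <= n)%nat -> 0 < s -> (j <= j')%nat -> (2 * j' <= n)%nat -> alpha n s j <= alpha n s j'.
Proof.
  intros Hn Hs Hj Hj'. destruct (Nat.eq_dec j j') as [->|]; [lra|].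
  left. apply alpha_increasing; lia || lra.
Qed.

(** * The secular equation *)

Definition denom (n : nat) (s mu : R) (m : nat) : R := mu * alpha n s m - 1.

(* [secular n s mu = 0] is the condition [(sym_mode n s mu)_n = - n / 2] below. *)
Definition secular (n : nat) (s mu : R) : R :=
  1 + 2 / INR n * rsum n (fun m => / denom n s mu m).

Definition sym_mode (n : nat) (s mu : R) (l : nat) : R :=
  rsum n (fun m => cos_mode n m l / denom n s mu m).

Lemma sym_mode_sym n s mu : (1 <= n)%nat -> sym_vec n (sym_mode n s mu).
Proof.
  intros Hn l Hl. apply rsum_ext. intros m _. rewrite cos_mode_reflect by lia. reflexivity.
Qed.

Lemma sym_mode_last n s mu :
  (1 <= n)%nat -> secular n s mu = 0 -> sym_mode n s mu n = - INR n / 2.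
Proof.
  intros Hn Hsec. assert (0 < INR n) by (apply lt_0_INR; lia). unfold secular in Hsec.
  unfold sym_mode. rewrite (rsum_ext n _ (fun m => / denom n s mu m))
    by (intros; rewrite cos_mode_last by exact Hn; unfold Rdiv; ring).
  apply (Rmult_eq_reg_l (2 / INR n)); [|apply Rgt_not_eq, Rdiv_lt_0_compat; lra].
  replace (2 / INR n * (- INR n / 2)) with (-1) by (field; lra). lra.
Qed.

(* [mu alpha / (mu alpha - 1) = 1 + 1 / (mu alpha - 1)] turns [mu A V] into [V + n e_n]. *)
Lemma sym_mode_eigvec n s mu :
  (1 <= n)%nat -> secular n s mu = 0 -> (forall m, (m < n)%nat -> denom n s mu m <> 0) ->
  is_eigvec_AinvB n s mu (sym_mode n s mu).
Proof.
  intros Hn Hsec Hden. assert (0 < INR n) by (apply lt_0_INR; lia).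
  assert (Hlast := sym_mode_last n s mu Hn Hsec).
  split; [exists n; split; [lia | rewrite Hlast; lra]|].
  intros l Hl.
  rewrite (Aop_ext n s _ (fun j => rsum n (fun m => mu / denom n s mu m * cos_mode n m j)))
    by (intros; unfold sym_mode; rewrite <- rsum_scal; apply rsum_ext; intros; unfold Rdiv; ring).
  rewrite Aop_rsum.
  rewrite (rsum_ext n _ (fun m => cos_mode n m l + cos_mode n m l / denom n s mu m)).
  2:{ intros m Hm. rewrite Aop_cos_mode by assumption.
      specialize (Hden m Hm). unfold denom in *. field. exact Hden. }
  rewrite rsum_plus, rsum_cos_mode by assumption. fold (sym_mode n s mu l).
  unfold Bop. destruct (Nat.eqb_spec l n) as [->|]; [rewrite Hlast; field; lra | ring].
Qed.

Lemma sin_mode_antisym n m : (1 <= n)%nat -> antisym_vec n (sin_mode n m).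
Proof. intros Hn l Hl. rewrite sin_mode_reflect by lia. ring. Qed.

Lemma sin_mode_eigvec n s m :
  0 <= s -> (1 <= m)%nat -> (2 * m < n)%nat -> is_eigvec_AinvB n s (/ alpha n s m) (sin_mode n m).
Proof.
  intros Hs Hm Hmn. assert (Ha := alpha_ge_1 n s m Hs). split.
  - exists 1%nat. split; [lia|]. apply Rgt_not_eq.
    unfold sin_mode. rewrite Rmult_1_l, freq_PI_frac.
    assert (0 < INR m) by (apply lt_0_INR; lia).
    assert (2 * INR m < INR n) by (rewrite <- (mult_INR 2); apply lt_INR; exact Hmn).
    apply sin_gt_0; apply PI_frac_strict; lra.
  - intros l Hl. rewrite Aop_scal, Aop_sin_mode by lia. unfold Bop.
    destruct (Nat.eqb_spec l n) as [->|]; [rewrite sin_mode_last by lia; ring | field; lra].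
Qed.

Lemma div2_bounds n : (2 * Nat.div n 2 <= n <= 2 * Nat.div n 2 + 1)%nat.
Proof.
  pose proof (Nat.div_mod n 2 ltac:(lia)). pose proof (Nat.mod_upper_bound n 2 ltac:(lia)). lia.
Qed.

(* Modes [m] and [n - m] have the same [alpha]; [fold_mode] picks the one in [0..n/2]. *)
Definition fold_mode (n m : nat) : nat := if Nat.leb m (Nat.div n 2) then m else (n - m)%nat.

Lemma fold_mode_le n m : (m < n)%nat -> (fold_mode n m <= Nat.div n 2)%nat.
Proof.
  intros H. pose proof (div2_bounds n). unfold fold_mode.
  destruct (Nat.leb_spec m (Nat.div n 2)); lia.
Qed.

Lemma fold_mode_id n k : (k <= Nat.div n 2)%nat -> fold_mode n k = k.
Proof. intros H. unfold fold_mode. apply Nat.leb_le in H. rewrite H. reflexivity. Qed.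

Lemma denom_fold_mode n s mu m : (m < n)%nat -> denom n s mu (fold_mode n m) = denom n s mu m.
Proof.
  intros H. unfold denom, fold_mode.
  destruct (Nat.leb m (Nat.div n 2)); [|rewrite alpha_reflect by lia]; reflexivity.
Qed.

Lemma sym_mode_spec n s mu :
  (1 <= n)%nat -> secular n s mu = 0 -> (forall j, (j <= Nat.div n 2)%nat -> denom n s mu j <> 0) ->
  is_eigvec_AinvB n s mu (sym_mode n s mu) /\ sym_vec n (sym_mode n s mu) /\ sym_mode n s mu n <> 0.
Proof.
  intros Hn Hsec Hden. assert (0 < INR n) by (apply lt_0_INR; lia).
  split; [|split; [apply sym_mode_sym, Hn | rewrite sym_mode_last by assumption; lra]].
  apply sym_mode_eigvec; [exact Hn | exact Hsec |].
  intros m Hm. rewrite <- denom_fold_mode by exact Hm. apply Hden, fold_mode_le, Hm.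
Qed.

Definition secular_poly (n : nat) (s mu : R) : R :=
  rprod (S (Nat.div n 2)) (denom n s mu)
  + 2 / INR n * rsum n (fun m => prod_skip (S (Nat.div n 2)) (fold_mode n m) (denom n s mu)).

Lemma secular_poly_eq n s mu :
  (1 <= n)%nat -> (forall j, (j <= Nat.div n 2)%nat -> denom n s mu j <> 0) ->
  secular_poly n s mu = rprod (S (Nat.div n 2)) (denom n s mu) * secular n s mu.
Proof.
  intros Hn Hden. assert (INR n <> 0) by (apply not_0_INR; lia).
  unfold secular_poly, secular. rewrite Rmult_plus_distr_l, Rmult_1_r. f_equal.
  rewrite <- !rsum_scal. apply rsum_ext. intros m Hm.
  assert (Hj := fold_mode_le n m Hm).
  rewrite <- (prod_skip_mul (S (Nat.div n 2)) (fold_mode n m) (denom n s mu)) by lia.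
  rewrite denom_fold_mode by exact Hm. field.
  split; [rewrite <- denom_fold_mode by exact Hm; apply Hden, Hj | assumption].
Qed.

Lemma continuity_secular_poly n s : continuity (secular_poly n s).
Proof.
  assert (Hden : forall j, continuity (fun mu => denom n s mu j))
    by (intros; apply (continuity_affine (alpha n s j) (-1))).
  unfold secular_poly, prod_skip.
  apply continuity_plus; [apply continuity_rprod, Hden|].
  apply continuity_scal, continuity_rsum. intros m.
  apply continuity_rprod. intros j. destruct (Nat.eqb j (fold_mode n m)); [|apply Hden].
  apply continuity_const. intros ? ?; reflexivity.
Qed.

Lemma denom_at_inv_alpha n s k j :
  0 < s -> denom n s (/ alpha n s k) j = (alpha n s j - alpha n s k) / alpha n s k.
Proof. intros Hs. unfold denom. pose proof (alpha_ge_1 n s k). field. lra. Qed.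

(* At the pole [/ alpha_k] only the terms of the modes folding to [k] survive, and each of
   them has the sign of [(-1)^k] since exactly [k] of the remaining factors are negative. *)
Lemma secular_poly_at_pole n s k :
  (1 <= n)%nat -> 0 < s -> (k <= Nat.div n 2)%nat -> 0 < (-1) ^ k * secular_poly n s (/ alpha n s k).
Proof.
  intros Hn Hs Hk. pose proof (div2_bounds n) as Hd.
  assert (Hak := alpha_ge_1 n s k (Rlt_le _ _ Hs)).
  assert (Hzero : denom n s (/ alpha n s k) k = 0)
    by (rewrite denom_at_inv_alpha by exact Hs; unfold Rdiv; ring).
  assert (Hsign : 0 < (-1) ^ k * prod_skip (S (Nat.div n 2)) k (denom n s (/ alpha n s k))).
  { replace k with (Nat.min (S (Nat.div n 2)) k) at 1 by lia.
    apply prod_skip_sign; intros j Hj Hjk; rewrite denom_at_inv_alpha by exact Hs.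
    - assert (alpha n s j < alpha n s k) by (apply alpha_increasing; lia || lra).
      apply Rdiv_neg_pos; lra.
    - assert (alpha n s k < alpha n s j) by (apply alpha_increasing; lia || lra).
      apply Rdiv_lt_0_compat; lra. }
  unfold secular_poly. rewrite (rprod_eq0 _ k) by (lia || exact Hzero).
  rewrite Rplus_0_l, <- Rmult_assoc, (Rmult_comm ((-1) ^ k)), Rmult_assoc, <- rsum_scal.
  apply Rmult_lt_0_compat; [apply Rdiv_lt_0_compat; [lra | apply lt_0_INR; lia]|].
  apply (rsum_pos n _ k); [| lia | rewrite fold_mode_id by exact Hk; lra].
  intros m Hm. destruct (Nat.eq_dec (fold_mode n m) k) as [->|Hne]; [lra|].
  rewrite (prod_skip_eq0 _ _ k) by (lia || exact Hzero || auto). lra.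
Qed.

Lemma denom_neq0_between n s k mu :
  0 < s -> (1 <= k <= Nat.div n 2)%nat -> / alpha n s k < mu < / alpha n s (k - 1) ->
  forall j, (j <= Nat.div n 2)%nat -> denom n s mu j <> 0.
Proof.
  intros Hs Hk [Hlo Hhi] j Hj. pose proof (div2_bounds n). unfold denom.
  pose proof (alpha_ge_1 n s k (Rlt_le _ _ Hs)).
  pose proof (alpha_ge_1 n s (k - 1) (Rlt_le _ _ Hs)).
  assert (0 < / alpha n s k) by (apply Rinv_0_lt_compat; lra).
  destruct (Nat.lt_ge_cases j k).
  - assert (alpha n s j <= alpha n s (k - 1)) by (apply alpha_le; lia || lra).
    assert (mu * alpha n s (k - 1) < / alpha n s (k - 1) * alpha n s (k - 1))
      by (apply Rmult_lt_compat_r; lra).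
    rewrite Rinv_l in * by lra. nra.
  - assert (alpha n s k <= alpha n s j) by (apply alpha_le; lia || lra).
    assert (/ alpha n s k * alpha n s k < mu * alpha n s k) by (apply Rmult_lt_compat_r; lra).
    rewrite Rinv_l in * by lra. nra.
Qed.

Lemma secular_root_between n s k :
  0 < s -> (1 <= k <= Nat.div n 2)%nat ->
  { mu | / alpha n s k < mu < / alpha n s (k - 1) /\ secular n s mu = 0 }.
Proof.
  intros Hs Hk. pose proof (div2_bounds n).
  assert (alpha n s (k - 1) < alpha n s k) by (apply alpha_increasing; lia || lra).
  pose proof (alpha_ge_1 n s (k - 1) (Rlt_le _ _ Hs)).
  assert (Hab : / alpha n s k < / alpha n s (k - 1)) by (apply Rinv_lt_contravar; nra).
  set (sg := (-1) ^ (k - 1)). assert (Hsg : sg <> 0) by (apply pow_nonzero; lra).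
  assert (Ha := secular_poly_at_pole n s k ltac:(lia) Hs ltac:(lia)).
  assert (Hb := secular_poly_at_pole n s (k - 1) ltac:(lia) Hs ltac:(lia)). fold sg in Hb.
  assert (Esg : (-1) ^ k = - sg)
    by (unfold sg; destruct k as [|k']; [lia | simpl; rewrite Nat.sub_0_r; ring]).
  rewrite Esg in Ha.
  destruct (IVT (fun x => sg * secular_poly n s x) _ _
              (continuity_scal _ sg (continuity_secular_poly n s)) Hab) as [z [Hz Hpz]];
    [lra | lra |].
  assert (Hz' : / alpha n s k < z < / alpha n s (k - 1)).
  { assert (z <> / alpha n s k) by (intros ->; lra).
    assert (z <> / alpha n s (k - 1)) by (intros ->; lra). lra. }
  exists z. split; [exact Hz'|].
  assert (Hden := denom_neq0_between n s k z Hs Hk Hz').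
  rewrite secular_poly_eq in Hpz by (lia || exact Hden).
  assert (rprod (S (Nat.div n 2)) (denom n s z) <> 0) by (apply rprod_neq0; intros; apply Hden; lia).
  apply Rmult_integral in Hpz. destruct Hpz as [|Hpz]; [contradiction|].
  apply Rmult_integral in Hpz. destruct Hpz; [contradiction | assumption].
Qed.

Lemma secular_roots_between n s :
  0 < s -> { mu : nat -> R | forall k, (1 <= k <= Nat.div n 2)%nat ->
    / alpha n s k < mu k < / alpha n s (k - 1) /\ secular n s (mu k) = 0 }.
Proof.
  intros Hs.
  assert (Hroot : forall k, { x | (1 <= k <= Nat.div n 2)%nat ->
                                  / alpha n s k < x < / alpha n s (k - 1) /\ secular n s x = 0 }).
  { intros k. destruct (le_dec 1 k) as [H1|H1]; [destruct (le_dec k (Nat.div n 2)) as [H2|H2]|].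
    - destruct (secular_root_between n s k Hs (conj H1 H2)) as [x Hx]. exists x. intros _. exact Hx.
    - exists 0. intros; lia.
    - exists 0. intros; lia. }
  exists (fun k => proj1_sig (Hroot k)). intros k. exact (proj2_sig (Hroot k)).
Qed.

Lemma secular_root_neg n s : (1 <= n)%nat -> 0 <= s -> { mu | mu < 0 /\ secular n s mu = 0 }.
Proof.
  intros Hn Hs. assert (Hn0 : 0 < INR n) by (apply lt_0_INR; lia).
  assert (Hneg : forall x j, x <= 0 -> denom n s x j < 0)
    by (intros x j Hx; unfold denom; pose proof (alpha_ge_1 n s j Hs); nra).
  set (q x := rprod (S (Nat.div n 2)) (denom n s x)).
  assert (Hq : forall x, x <= 0 -> q x <> 0)
    by (intros; apply rprod_neq0; intros; apply Rlt_not_eq, Hneg; lra).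
  assert (Heq : forall x, x <= 0 -> secular_poly n s x = q x * secular n s x)
    by (intros; apply secular_poly_eq; [exact Hn | intros; apply Rlt_not_eq, Hneg; lra]).
  assert (Hq2 : 0 < q (-2) * q 0).
  { unfold q. rewrite rprod_mult. apply rprod_pos. intros j _.
    pose proof (Hneg (-2) j). pose proof (Hneg 0 j). nra. }
  assert (H0 : secular n s 0 = -1).
  { unfold secular. rewrite (rsum_ext n _ (fun _ => -1)) by (intros; unfold denom; field).
    rewrite rsum_const. field. lra. }
  assert (H2 : 0 < secular n s (-2)).
  { assert (Hsum : INR n * (- / 3) <= rsum n (fun m => / denom n s (-2) m)).
    { apply rsum_ge. intros m _. unfold denom. pose proof (alpha_ge_1 n s m Hs).
      replace (/ (-2 * alpha n s m - 1)) with (- / (2 * alpha n s m + 1)) by (field; lra).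
      apply Ropp_le_contravar, Rinv_le_contravar; lra. }
    apply (Rmult_le_compat_l (2 / INR n)) in Hsum; [|left; apply Rdiv_lt_0_compat; lra].
    replace (2 / INR n * (INR n * - / 3)) with (- (2 / 3)) in Hsum by (field; lra).
    unfold secular. lra. }
  assert (Hq0 : q 0 <> 0) by (apply Hq; lra).
  assert (Hlo : - q 0 * secular_poly n s (-2) < 0) by (rewrite Heq by lra; nra).
  assert (Hhi : 0 < - q 0 * secular_poly n s 0) by (rewrite Heq, H0 by lra; nra).
  destruct (IVT (fun x => - q 0 * secular_poly n s x) (-2) 0
              (continuity_scal _ _ (continuity_secular_poly n s)) ltac:(lra) Hlo Hhi)
    as [z [Hz Hpz]].
  assert (Hp : secular_poly n s z = 0) by (apply (Rmult_eq_reg_l (- q 0)); lra).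
  exists z. rewrite Heq in Hp by lra.
  assert (z <> 0) by (intros ->; rewrite H0 in Hp; lra).
  split; [lra|]. apply Rmult_integral in Hp. destruct Hp as [Hp|Hp]; [|exact Hp].
  exfalso. apply (Hq z); lra.
Qed.

(** * Normalization and counting *)

Definition vnorm (n : nat) (p : nat -> R) : R := sqrt (vsum n (fun i => p i ^ 2)).
Definition normalize (n : nat) (p : nat -> R) (l : nat) : R := / vnorm n p * p l.

Lemma vsum_sq_pos n p : (exists i, (1 <= i <= n)%nat /\ p i <> 0) -> 0 < vsum n (fun i => p i ^ 2).
Proof.
  intros Hp. rewrite (vsum_ext n _ (fun i => p i * p i)) by (intros; ring). apply dot_pos, Hp.
Qed.

Lemma vnorm_pos n p : (exists i, (1 <= i <= n)%nat /\ p i <> 0) -> 0 < vnorm n p.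
Proof. intros Hp. apply sqrt_lt_R0, vsum_sq_pos, Hp. Qed.

Lemma normalize_spec n s lam p :
  is_eigvec_AinvB n s lam p -> is_eigvec_AinvB n s lam (normalize n p) /\ unit_norm n (normalize n p).
Proof.
  intros [Hex He]. assert (Hr := vnorm_pos n p Hex). unfold normalize. split; [split|].
  - destruct Hex as [i [Hi Hp]]. exists i. split; [exact Hi|].
    apply Rmult_integral_contrapositive_currified; [apply Rinv_neq_0_compat; lra | exact Hp].
  - intros i Hi. rewrite (Aop_ext n s _ (fun l => / vnorm n p * (lam * p l))) by (intros; ring).
    rewrite Aop_scal, He by exact Hi. unfold Bop. destruct (Nat.eqb i n); ring.
  - unfold unit_norm. assert (HS := vsum_sq_pos n p Hex).
    assert (Hv2 : vnorm n p ^ 2 = vsum n (fun i => p i ^ 2)) by (apply pow2_sqrt; lra).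
    rewrite (vsum_ext n _ (fun i => / vnorm n p ^ 2 * p i ^ 2)) by (intros; field; lra).
    rewrite vsum_scal, Hv2. field. lra.
Qed.

Lemma cnt_negb M s : (cnt M s + cnt M (fun k => negb (s k)) = M)%nat.
Proof. induction M as [|M IH]; cbn [cnt]; [reflexivity|]. destruct (s (S M)); cbn [negb]; lia. Qed.

Lemma cnt_odd M : cnt M Nat.odd = Nat.div2 (S M).
Proof.
  induction M as [|M IH]; [reflexivity|]. cbn [cnt]. rewrite IH.
  pose proof (Nat.div2_odd (S M)) as E1. pose proof (Nat.div2_odd (S (S M))) as E2.
  rewrite Nat.odd_succ, Nat.even_succ in E2. rewrite Nat.odd_succ, <- Nat.negb_odd in E1 |- *.
  destruct (Nat.odd M); cbn [negb Nat.b2n] in *; lia.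
Qed.

Lemma half_odd k : Nat.odd k = true -> (S k = 2 * Nat.div2 (S k))%nat.
Proof.
  intros H. pose proof (Nat.div2_odd (S k)) as E.
  rewrite Nat.odd_succ, <- Nat.negb_odd, H in E. cbn [negb Nat.b2n] in E. lia.
Qed.

Lemma half_even k : Nat.odd k = false -> (k = 2 * Nat.div2 (S k))%nat.
Proof.
  intros H. pose proof (Nat.div2_odd (S k)) as E.
  rewrite Nat.odd_succ, <- Nat.negb_odd, H in E. cbn [negb Nat.b2n] in E. lia.
Qed.

Lemma odd_succ_negb k : Nat.odd (S k) = negb (Nat.odd k).
Proof. rewrite Nat.odd_succ, Nat.negb_odd. reflexivity. Qed.

Lemma decreasing_lt (f : nat -> R) a b :
  (forall k, (a <= k)%nat -> (S k <= b)%nat -> f (S k) < f k) ->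
  forall j k, (a <= j)%nat -> (j < k)%nat -> (k <= b)%nat -> f k < f j.
Proof.
  intros Hf j k Hj Hjk Hkb. induction k as [|k IH]; [lia|].
  destruct (Nat.eq_dec j k) as [->|]; [apply Hf; lia|].
  apply Rlt_trans with (f k); [apply Hf | apply IH]; lia.
Qed.

(** * The eigenbasis *)

Section Eigenbasis.

Variables (n : nat) (sigma : R) (mu : nat -> R) (mu0 : R).
Hypothesis n_ge_2 : (2 <= n)%nat.
Hypothesis sigma_pos : 0 < sigma.
Hypothesis mu_root : forall k, (1 <= k <= Nat.div n 2)%nat ->
  / alpha n sigma k < mu k < / alpha n sigma (k - 1) /\ secular n sigma (mu k) = 0.
Hypothesis mu0_root : mu0 < 0 /\ secular n sigma mu0 = 0.

(* The positive eigenvalues interlace, [mu_1 > 1/alpha_1 > mu_2 > 1/alpha_2 > ...]: the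
   odd indices [2j - 1] carry the symmetric eigenvectors, the even indices [2j] the sine
   ones, and the index [n] the negative eigenvalue. *)
Definition eigval (k : nat) : R :=
  if Nat.eqb k n then mu0
  else if Nat.odd k then mu (Nat.div2 (S k)) else / alpha n sigma (Nat.div2 (S k)).

Definition eigvec_raw (k : nat) : nat -> R :=
  if Nat.eqb k n then sym_mode n sigma mu0
  else if Nat.odd k then sym_mode n sigma (mu (Nat.div2 (S k)))
  else sin_mode n (Nat.div2 (S k)).

Definition eigvec (k : nat) : nat -> R := normalize n (eigvec_raw k).

Lemma eigval_pos k : (1 <= k <= n - 1)%nat -> 0 < eigval k.
Proof.
  intros Hk. pose proof (div2_bounds n). unfold eigval.
  replace (Nat.eqb k n) with false by (symmetry; apply Nat.eqb_neq; lia).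
  assert (Ha : forall j, 0 < / alpha n sigma j)
    by (intros; apply Rinv_0_lt_compat; pose proof (alpha_ge_1 n sigma j (Rlt_le _ _ sigma_pos)); lra).
  destruct (Nat.odd k) eqn:Ho; [|apply Ha].
  pose proof (half_odd k Ho). destruct (mu_root (Nat.div2 (S k)) ltac:(lia)) as [[Hlo _] _].
  specialize (Ha (Nat.div2 (S k))). lra.
Qed.

Lemma eigval_succ_lt k : (1 <= k)%nat -> (S k <= n - 1)%nat -> eigval (S k) < eigval k.
Proof.
  intros Hk HSk. pose proof (div2_bounds n). unfold eigval.
  replace (Nat.eqb k n) with false by (symmetry; apply Nat.eqb_neq; lia).
  replace (Nat.eqb (S k) n) with false by (symmetry; apply Nat.eqb_neq; lia).
  rewrite odd_succ_negb. destruct (Nat.odd k) eqn:Ho; cbn [negb].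
  - pose proof (half_odd k Ho). pose proof (half_even (S k) ltac:(rewrite odd_succ_negb, Ho; reflexivity)).
    replace (Nat.div2 (S (S k))) with (Nat.div2 (S k)) by lia.
    destruct (mu_root (Nat.div2 (S k)) ltac:(lia)) as [[Hlo _] _]. exact Hlo.
  - pose proof (half_even k Ho). pose proof (half_odd (S k) ltac:(rewrite odd_succ_negb, Ho; reflexivity)).
    replace (Nat.div2 (S k)) with (Nat.div2 (S (S k)) - 1)%nat by lia.
    destruct (mu_root (Nat.div2 (S (S k))) ltac:(lia)) as [[_ Hhi] _]. exact Hhi.
Qed.

Lemma eigval_last : eigval n = mu0.
Proof. unfold eigval. rewrite Nat.eqb_refl. reflexivity. Qed.

Lemma eigval_injective j k :
  (1 <= j <= n)%nat -> (1 <= k <= n)%nat -> j <> k -> eigval j <> eigval k.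
Proof.
  assert (H : forall j k, (1 <= j)%nat -> (j < k)%nat -> (k <= n)%nat -> eigval k < eigval j).
  { intros j' k' Hj Hjk Hk. destruct (Nat.eq_dec k' n) as [->|].
    - assert (0 < eigval j') by (apply eigval_pos; lia). rewrite eigval_last. lra.
    - apply (decreasing_lt eigval 1 (n - 1)); try lia. intros; apply eigval_succ_lt; lia. }
  intros Hj Hk Hjk. destruct (Nat.lt_total j k) as [Hlt|[Heq|Hgt]]; [| contradiction |].
  - specialize (H j k ltac:(lia) Hlt ltac:(lia)). lra.
  - specialize (H k j ltac:(lia) Hgt ltac:(lia)). lra.
Qed.

Lemma eigpair_last :
  is_eigvec_AinvB n sigma (eigval n) (eigvec_raw n) /\
  sym_vec n (eigvec_raw n) /\ eigvec_raw n n <> 0.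
Proof.
  rewrite eigval_last. unfold eigvec_raw. rewrite Nat.eqb_refl.
  apply sym_mode_spec; [lia | apply mu0_root |]. intros j _. unfold denom.
  pose proof (alpha_ge_1 n sigma j (Rlt_le _ _ sigma_pos)). destruct mu0_root. nra.
Qed.

Lemma eigpair_odd k : (1 <= k <= n - 1)%nat -> Nat.odd k = true ->
  is_eigvec_AinvB n sigma (eigval k) (eigvec_raw k) /\
  sym_vec n (eigvec_raw k) /\ eigvec_raw k n <> 0.
Proof.
  intros Hk Ho. pose proof (div2_bounds n). pose proof (half_odd k Ho).
  unfold eigval, eigvec_raw. replace (Nat.eqb k n) with false by (symmetry; apply Nat.eqb_neq; lia).
  rewrite Ho. destruct (mu_root (Nat.div2 (S k)) ltac:(lia)) as [Hint Hsec].
  apply sym_mode_spec; [lia | exact Hsec |].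
  apply (denom_neq0_between n sigma (Nat.div2 (S k))); [exact sigma_pos | lia | exact Hint].
Qed.

Lemma eigpair_even k : (1 <= k <= n - 1)%nat -> Nat.odd k = false ->
  is_eigvec_AinvB n sigma (eigval k) (eigvec_raw k) /\
  eigvec_raw k = sin_mode n (Nat.div2 (S k)).
Proof.
  intros Hk Ho. pose proof (half_even k Ho).
  unfold eigval, eigvec_raw. replace (Nat.eqb k n) with false by (symmetry; apply Nat.eqb_neq; lia).
  rewrite Ho. split; [|reflexivity]. apply sin_mode_eigvec; lra || lia.
Qed.

Lemma eigvec_spec k : (1 <= k <= n)%nat ->
  is_eigvec_AinvB n sigma (eigval k) (eigvec k) /\ unit_norm n (eigvec k).
Proof.
  intros Hk. apply normalize_spec.
  destruct (Nat.eq_dec k n) as [->|]; [apply eigpair_last|].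
  destruct (Nat.odd k) eqn:Ho; [apply eigpair_odd | apply eigpair_even]; auto; lia.
Qed.

Lemma eigvec_sym k : (1 <= k <= n)%nat -> k = n \/ Nat.odd k = true ->
  sym_vec n (eigvec k) /\ eigvec k n <> 0.
Proof.
  intros Hk Hcase.
  assert (H : is_eigvec_AinvB n sigma (eigval k) (eigvec_raw k) /\
              sym_vec n (eigvec_raw k) /\ eigvec_raw k n <> 0).
  { destruct (Nat.eq_dec k n) as [->|]; [apply eigpair_last|].
    apply eigpair_odd; [lia | destruct Hcase; [contradiction | assumption]]. }
  destruct H as [[Hex _] [Hsym Hlast]]. assert (Hr := vnorm_pos n _ Hex). unfold eigvec, normalize.
  split; [intros l Hl; rewrite Hsym by exact Hl; reflexivity|].
  apply Rmult_integral_contrapositive_currified; [apply Rinv_neq_0_compat; lra | exact Hlast].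
Qed.

Lemma eigvec_sine k : (1 <= k <= n - 1)%nat -> Nat.odd k = false ->
  (exists (m : Z) (b : R), b <> 0 /\ forall l, (1 <= l <= n)%nat ->
     eigvec k l = b * sin (INR l * (2 * PI * IZR m / INR n))) /\
  antisym_vec n (eigvec k) /\ eigvec k n = 0.
Proof.
  intros Hk Ho. destruct (eigpair_even k Hk Ho) as [[Hex _] E].
  assert (Hr := vnorm_pos n _ Hex). unfold eigvec, normalize. rewrite E in *.
  split; [|split].
  - exists (Z.of_nat (Nat.div2 (S k))), (/ vnorm n (sin_mode n (Nat.div2 (S k)))).
    split; [apply Rinv_neq_0_compat; lra|]. intros l _.
    unfold sin_mode, freq. rewrite <- INR_IZR_INZ. reflexivity.
  - intros l Hl. rewrite (sin_mode_antisym n _ ltac:(lia) l Hl). ring.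
  - rewrite sin_mode_last by lia. ring.
Qed.

Lemma eigvec_lin_indep : lin_indep n eigvec.
Proof.
  apply (lin_indep_of_eigvecs n sigma eigvec eigval); [lia | lra | |].
  - intros k Hk. apply eigvec_spec, Hk.
  - exact eigval_injective.
Qed.

End Eigenbasis.

Theorem lemma3p2 (n : nat) (sigma : R) (hn : (2 <= n)%nat) (hsigma : 0 < sigma) :
  exists (P : nat -> nat -> R) (lam : nat -> R) (s : nat -> bool),
    lin_indep n P /\
    (forall k, (1 <= k <= n)%nat ->
       is_eigvec_AinvB n sigma (lam k) (P k) /\ unit_norm n (P k)) /\
    (forall k, (1 <= k <= n - 1)%nat -> 0 < lam k) /\
    lam n < 0 /\
    cnt (n - 1) s = Nat.div n 2 /\
    (forall k, (1 <= k <= n - 1)%nat -> s k = true ->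
       sym_vec n (P k) /\ P k n <> 0) /\
    cnt (n - 1) (fun k => negb (s k)) = Nat.div (n - 1) 2 /\
    (forall k, (1 <= k <= n - 1)%nat -> s k = false ->
       (exists (m : Z) (b : R), b <> 0 /\
          forall l, (1 <= l <= n)%nat ->
            P k l = b * sin (INR l * (2 * PI * IZR m / INR n))) /\
       antisym_vec n (P k) /\ P k n = 0) /\
    sym_vec n (P n) /\ P n n <> 0.
Proof.
  destruct (secular_roots_between n sigma hsigma) as [mu Hmu].
  destruct (secular_root_neg n sigma ltac:(lia) (Rlt_le _ _ hsigma)) as [mu0 Hmu0].
  assert (Hodd : cnt (n - 1) Nat.odd = Nat.div n 2).
  { rewrite cnt_odd, Nat.div2_div. f_equal. lia. }
  exists (eigvec n sigma mu mu0), (eigval n sigma mu mu0), Nat.odd.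
  split; [apply eigvec_lin_indep; assumption|].
  split; [intros k Hk; apply eigvec_spec; assumption|].
  split; [intros k Hk; apply eigval_pos; assumption|].
  split; [rewrite eigval_last; apply Hmu0|].
  split; [exact Hodd|].
  split; [intros k Hk Ho; apply eigvec_sym; auto; lia|].
  split; [pose proof (cnt_negb (n - 1) Nat.odd); pose proof (div2_bounds n);
          pose proof (div2_bounds (n - 1)); lia|].
  split; [intros k Hk Ho; apply eigvec_sine; assumption|].
  apply eigvec_sym; auto; lia.
Qed.
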